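(* Let $F$ be a Finsler function on a two-dimensional manifold $M$, written on the region $y^1\neq0$ as $F=|y^1|f(x,u)$ with $u=y^2/y^1$, and let $\sigma$ be a smooth function on $M$. Put $Q=\frac{f'}{f-uf'}$ and let $\overline F=e^{\sigma(x)}F=|y^1|\overline f(x,u)$ with $\overline f=e^{\sigma}f$, $\overline Q=\frac{\overline f'}{\overline f-u\overline f'}$. Then $$\overline f_1'''+\overline Q\,\overline f_2'''=f_1'''+Qf_2'''+\frac{2\sigma_1QQ'Q'''-3\sigma_1Q''^2Q-2\sigma_2Q'Q'''+3\sigma_2Q''^2}{2Q'^2},$$ where $\overline f_1,\overline f_2$ are the functions $f_1,f_2$ computed from $\overline f$ in place of $f$.
   Context: Coordinates $(x^1,x^2)$ on $M$, $(x^i,y^i)$ on $TM$; $\partial_i=\partial/\partial x^i$; primes denote derivatives with respect to $u$; $\sigma_i=\partial\sigma/\partial x^i$. The functions $f_1,f_2$ are defined by $f_1=\frac{(\partial_1f+u\partial_2f)f''-(\partial_1f'+u\partial_2f'-\partial_2f)f'}{2ff''}$ and $f_2=\frac{u(\partial_1f+u\partial_2f)f''+(\partial_1f'+u\partial_2f'-\partial_2f)(f-uf')}{2ff''}$; they satisfy $G^1=f_1(y^1)^2$, $G^2=f_2(y^1)^2$ for the geodesic spray coefficients $G^i$ of $F$. For a Finsler surface one has $f''\neq0$ and $Q'=\frac{ff''}{(f-uf')^2}\neq0$. *)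

From Stdlib Require Import Reals List.
From Coquelicot Require Import Coquelicot.
Open Scope R_scope.

(* Functions of the local coordinates (x^1, x^2, u) with u = y^2/y^1. *)
Definition fun3 := R -> R -> R -> R.

Definition d1 (g : fun3) : fun3 := fun x1 x2 u => Derive (fun t => g t x2 u) x1.
Definition d2 (g : fun3) : fun3 := fun x1 x2 u => Derive (fun t => g x1 t u) x2.
Definition du (g : fun3) : fun3 := fun x1 x2 u => Derive (fun t => g x1 x2 t) u.

Inductive dir := D1 | D2 | DU.

Definition dpart (k : dir) (g : fun3) : fun3 :=
  match k with D1 => d1 g | D2 => d2 g | DU => du g end.

Definition ex_dpart (k : dir) (g : fun3) (x1 x2 u : R) : Prop :=
  match k with
  | D1 => ex_derive (fun t => g t x2 u) x1
  | D2 => ex_derive (fun t => g x1 t u) x2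
  | DU => ex_derive (fun t => g x1 x2 t) u
  end.

Fixpoint iter_d (l : list dir) (g : fun3) : fun3 :=
  match l with nil => g | k :: l' => dpart k (iter_d l' g) end.

Definition smooth_on (D : R -> R -> R -> Prop) (g : fun3) : Prop :=
  forall (l : list dir) (x1 x2 u : R), D x1 x2 u ->
    (forall k, ex_dpart k (iter_d l g) x1 x2 u) /\
    continuous (fun q : R * R * R => iter_d l g (fst (fst q)) (snd (fst q)) (snd q))
               (x1, x2, u).

Definition Qf (g : fun3) : fun3 :=
  fun x1 x2 u => du g x1 x2 u / (g x1 x2 u - u * du g x1 x2 u).

(* f_1, f_2 of the paper (G^1 = f_1 (y^1)^2, G^2 = f_2 (y^1)^2) *)
Definition f1 (g : fun3) : fun3 := fun x1 x2 u =>
  ((d1 g x1 x2 u + u * d2 g x1 x2 u) * du (du g) x1 x2 u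
   - (d1 (du g) x1 x2 u + u * d2 (du g) x1 x2 u - d2 g x1 x2 u) * du g x1 x2 u)
  / (2 * g x1 x2 u * du (du g) x1 x2 u).

Definition f2 (g : fun3) : fun3 := fun x1 x2 u =>
  (u * (d1 g x1 x2 u + u * d2 g x1 x2 u) * du (du g) x1 x2 u
   + (d1 (du g) x1 x2 u + u * d2 (du g) x1 x2 u - d2 g x1 x2 u)
     * (g x1 x2 u - u * du g x1 x2 u))
  / (2 * g x1 x2 u * du (du g) x1 x2 u).

Definition du3 (g : fun3) : fun3 := du (du (du g)).

Definition fbar (sigma : R -> R -> R) (g : fun3) : fun3 :=
  fun x1 x2 u => exp (sigma x1 x2) * g x1 x2 u.

From Pilot Require Import Defs.
From Stdlib Require Import Reals List Lra FunctionalExtensionality.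
From Coquelicot Require Import Coquelicot.
Open Scope R_scope.

(* The conformal factor e^sigma leaves Q unchanged, and changes f_1 and f_2 by a
   quadratic polynomial in u plus -Q c / 2 and c / 2 respectively, where
   c = (sigma_1 Q - sigma_2) / Q'.  Three u-derivatives kill the polynomials, so
   the change of f_1''' + Q f_2''' is -((Q c)''' - Q c''') / 2.  Since c Q' is
   affine in Q, this Leibniz defect equals -2 (sigma_1 Q - sigma_2) S(Q), where
   S(Q) = Q'''/Q' - 3/2 (Q''/Q')^2 is the Schwarzian derivative of Q; and
   (sigma_1 Q - sigma_2) S(Q) is exactly the stated correction term. *)

Fixpoint derivable_upto (n : nat) (f : R -> R) : Prop :=
  match n with
  | O => True
  | S m => (forall x, ex_derive f x) /\ derivable_upto m (Derive f)
  end.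

Definition smooth (f : R -> R) : Prop := forall n, derivable_upto n f.

Lemma derivable_upto_ext n f g :
  (forall x, f x = g x) -> derivable_upto n f -> derivable_upto n g.
Proof.
  revert f g; induction n as [|n IH]; intros f g Efg Hf; [exact I|].
  destruct Hf as [Hf1 Hf2]; split.
  - intro x; exact (ex_derive_ext f g x Efg (Hf1 x)).
  - apply (IH (Derive f)); [intro x; apply Derive_ext, Efg | exact Hf2].
Qed.

Lemma derivable_upto_weaken n f : derivable_upto (S n) f -> derivable_upto n f.
Proof.
  revert f; induction n as [|n IH]; intros f [Hf1 Hf2]; [exact I|].
  split; [exact Hf1 | exact (IH _ Hf2)].
Qed.

Lemma derivable_upto_const n c : derivable_upto n (fun _ => c).
Proof.
  revert c; induction n as [|n IH]; intro c; [exact I|]; split.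
  - intro x; apply ex_derive_const.
  - apply (derivable_upto_ext n (fun _ => 0)); [|apply IH].
    intro x; symmetry; apply Derive_const.
Qed.

Lemma derivable_upto_plus n f g :
  derivable_upto n f -> derivable_upto n g -> derivable_upto n (fun x => f x + g x).
Proof.
  revert f g; induction n as [|n IH]; intros f g Hf Hg; [exact I|].
  destruct Hf as [Hf1 Hf2], Hg as [Hg1 Hg2]; split.
  - intro x; apply (ex_derive_plus f g x); auto.
  - apply (derivable_upto_ext n (fun x => Derive f x + Derive g x)); [|auto].
    intro x; symmetry; apply Derive_plus; auto.
Qed.

Lemma derivable_upto_mult n f g :
  derivable_upto n f -> derivable_upto n g -> derivable_upto n (fun x => f x * g x).
Proof.
  revert f g; induction n as [|n IH]; intros f g Hf Hg; [exact I|].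
  pose proof (derivable_upto_weaken _ _ Hf) as Hf'.
  pose proof (derivable_upto_weaken _ _ Hg) as Hg'.
  destruct Hf as [Hf1 Hf2], Hg as [Hg1 Hg2]; split.
  - intro x; apply ex_derive_mult; auto.
  - apply (derivable_upto_ext n (fun x => Derive f x * g x + f x * Derive g x)).
    + intro x; symmetry; apply Derive_mult; auto.
    + apply derivable_upto_plus; auto.
Qed.

Lemma derivable_upto_inv n g :
  (forall x, g x <> 0) -> derivable_upto n g -> derivable_upto n (fun x => / g x).
Proof.
  revert g; induction n as [|n IH]; intros g Hg0 Hg; [exact I|].
  pose proof (derivable_upto_weaken _ _ Hg) as Hg'.
  destruct Hg as [Hg1 Hg2]; split.
  - intro x; apply ex_derive_inv; auto.
  - apply (derivable_upto_ext n (fun x => (-1 * Derive g x) * (/ g x * / g x))).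
    + intro x; rewrite Derive_inv by auto; field; auto.
    + apply derivable_upto_mult; [apply derivable_upto_mult|];
        auto using derivable_upto_const, derivable_upto_mult.
Qed.

Lemma smooth_const c : smooth (fun _ => c).
Proof. intro n; apply derivable_upto_const. Qed.

Lemma smooth_id : smooth (fun x => x).
Proof.
  intros [|n]; [exact I|]; split.
  - intro x; apply ex_derive_id.
  - apply (derivable_upto_ext n (fun _ => 1)); [|apply derivable_upto_const].
    intro x; symmetry; apply Derive_id.
Qed.

Lemma smooth_plus f g : smooth f -> smooth g -> smooth (fun x => f x + g x).
Proof. intros Hf Hg n; apply derivable_upto_plus; auto. Qed.

Lemma smooth_mult f g : smooth f -> smooth g -> smooth (fun x => f x * g x).
Proof. intros Hf Hg n; apply derivable_upto_mult; auto. Qed.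

Lemma smooth_minus f g : smooth f -> smooth g -> smooth (fun x => f x - g x).
Proof.
  intros Hf Hg n; apply (derivable_upto_ext n (fun x => f x + -1 * g x)).
  - intro x; ring.
  - apply smooth_plus, smooth_mult; auto using smooth_const.
Qed.

Lemma smooth_div f g :
  (forall x, g x <> 0) -> smooth f -> smooth g -> smooth (fun x => f x / g x).
Proof. intros Hg0 Hf Hg n; apply derivable_upto_mult, derivable_upto_inv; auto. Qed.

Lemma smooth_Derive f : smooth f -> smooth (Derive f).
Proof. intros Hf n; exact (proj2 (Hf (S n))). Qed.

Lemma smooth_ex_derive f x : smooth f -> ex_derive f x.
Proof. intro Hf; exact (proj1 (Hf 1%nat) x). Qed.

Lemma Derive_n_Derive f k x : Derive_n (Derive f) k x = Derive_n f (S k) x.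
Proof.
  revert x; induction k as [|k IH]; intro x; [reflexivity|].
  apply Derive_ext, IH.
Qed.

Lemma smooth_ex_derive_n f k x : smooth f -> ex_derive_n f k x.
Proof.
  destruct k as [|k]; [intros; exact I|]; revert f x.
  induction k as [|k IH]; intros f x Hf; [exact (smooth_ex_derive f x Hf)|].
  apply (ex_derive_ext (Derive_n (Derive f) k)).
  - apply Derive_n_Derive.
  - exact (IH _ x (smooth_Derive f Hf)).
Qed.

Ltac solve_smooth :=
  repeat match goal with
  | |- smooth _ => assumption
  | |- smooth (fun _ => ?c) => exact (smooth_const c)
  | |- smooth (fun t => t) => exact smooth_id
  | |- smooth (Derive _) => apply smooth_Derive
  | |- smooth (fun t => Derive ?f t) => apply (smooth_Derive f)
  | |- smooth (fun t => @?a t + @?b t) => apply (smooth_plus a b)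
  | |- smooth (fun t => @?a t - @?b t) => apply (smooth_minus a b)
  | |- smooth (fun t => @?a t * @?b t) => apply (smooth_mult a b)
  | |- smooth (fun t => @?a t / @?b t) => apply (smooth_div a b)
  | |- forall _, _ <> 0 => assumption
  end.

Lemma Derive_n_plus_smooth f g n x : smooth f -> smooth g ->
  Derive_n (fun t => f t + g t) n x = Derive_n f n x + Derive_n g n x.
Proof.
  intros Hf Hg; apply Derive_n_plus; apply filter_forall;
    intros y k _; apply smooth_ex_derive_n; assumption.
Qed.

Lemma Derive_n_mult_1 f g x : smooth f -> smooth g ->
  Derive_n (fun t => f t * g t) 1 x =
  Derive_n f 1 x * Derive_n g 0 x + Derive_n f 0 x * Derive_n g 1 x.
Proof. intros Hf Hg; apply Derive_mult; apply smooth_ex_derive; assumption. Qed.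

Lemma Derive_n_mult_2 f g x : smooth f -> smooth g ->
  Derive_n (fun t => f t * g t) 2 x =
  Derive_n f 2 x * Derive_n g 0 x + 2 * Derive_n f 1 x * Derive_n g 1 x
  + Derive_n f 0 x * Derive_n g 2 x.
Proof.
  intros Hf Hg.
  rewrite <- Derive_n_Derive,
    (Derive_n_ext _ (fun t => Derive f t * g t + f t * Derive g t)).
  - rewrite Derive_n_plus_smooth, !Derive_n_mult_1 by solve_smooth.
    rewrite !Derive_n_Derive; simpl; ring.
  - intro t; apply Derive_mult; apply smooth_ex_derive; assumption.
Qed.

Lemma Derive_n_mult_3 f g x : smooth f -> smooth g ->
  Derive_n (fun t => f t * g t) 3 x =
  Derive_n f 3 x * Derive_n g 0 x + 3 * Derive_n f 2 x * Derive_n g 1 x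
  + 3 * Derive_n f 1 x * Derive_n g 2 x + Derive_n f 0 x * Derive_n g 3 x.
Proof.
  intros Hf Hg.
  rewrite <- Derive_n_Derive,
    (Derive_n_ext _ (fun t => Derive f t * g t + f t * Derive g t)).
  - rewrite Derive_n_plus_smooth, !Derive_n_mult_2 by solve_smooth.
    rewrite !Derive_n_Derive; simpl; ring.
  - intro t; apply Derive_mult; apply smooth_ex_derive; assumption.
Qed.

Lemma Derive_n_affine f a b k x : smooth f ->
  Derive_n (fun t => a * f t + b) (S k) x = a * Derive_n f (S k) x.
Proof.
  intro Hf; rewrite Derive_n_plus_smooth by solve_smooth.
  rewrite Derive_n_scal_l, Derive_n_const; ring.
Qed.

Lemma Derive_n_quadratic_3 a b c x : Derive_n (fun t => a + b * t + c * (t * t)) 3 x = 0.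
Proof.
  rewrite <- Derive_n_Derive, (Derive_n_ext _ (fun t => b + 2 * c * t)),
    <- Derive_n_Derive, (Derive_n_ext _ (fun _ => 2 * c)).
  - apply (Derive_n_const 0).
  - intro t; apply is_derive_unique; auto_derive; auto; ring.
  - intro t; apply is_derive_unique; auto_derive; auto; ring.
Qed.

Lemma Derive_n_3_add_quadratic h m a b c k x : smooth h -> smooth m ->
  Derive_n (fun t => h t + (a + b * t + c * (t * t)) + k * m t) 3 x
  = Derive_n h 3 x + k * Derive_n m 3 x.
Proof.
  intros Hh Hm.
  rewrite (Derive_n_plus_smooth (fun t => h t + _)), (Derive_n_plus_smooth h),
    Derive_n_quadratic_3, Derive_n_scal_l by solve_smooth.
  ring.
Qed.

Definition schwarzian (Q : R -> R) (x : R) : R :=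
  Derive_n Q 3 x / Derive Q x - 3 / 2 * (Derive_n Q 2 x / Derive Q x) ^ 2.

Lemma Derive_n_3_commutator_schwarzian Q a b x :
  smooth Q -> (forall t, Derive Q t <> 0) ->
  let g := fun t => (a * Q t + b) / Derive Q t in
  Derive_n (fun t => Q t * g t) 3 x - Q x * Derive_n g 3 x
  = -2 * (a * Q x + b) * schwarzian Q x.
Proof.
  intros HQ HQ1 g.
  assert (Hg : smooth g) by (unfold g; solve_smooth).
  assert (HgQ1 : forall k, Derive_n (fun t => g t * Derive Q t) (S k) x
                           = a * Derive_n Q (S k) x).
  { intro k; rewrite <- (Derive_n_affine Q a b) by exact HQ.
    apply Derive_n_ext; intro t; unfold g; field; apply HQ1. }
  (* Differentiating g Q' = a Q + b once and twice expresses g' and g'' through Q. *)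
  pose proof (HgQ1 0%nat) as E1; pose proof (HgQ1 1%nat) as E2.
  rewrite Derive_n_mult_1 in E1 by solve_smooth.
  rewrite Derive_n_mult_2 in E2 by solve_smooth.
  rewrite Derive_n_mult_3 by solve_smooth.
  rewrite !Derive_n_Derive in E1; rewrite !Derive_n_Derive in E2.
  unfold schwarzian.
  change (Derive_n Q 1 x) with (Derive Q x) in *.
  change (Derive_n Q 0 x) with (Q x) in *.
  change (Derive_n g 0 x) with ((a * Q x + b) / Derive Q x) in *.
  set (q1 := Derive Q x) in *; set (q2 := Derive_n Q 2 x) in *.
  set (g1 := Derive_n g 1 x) in *; set (g2 := Derive_n g 2 x) in *.
  assert (Hq1 : q1 <> 0) by apply HQ1.
  assert (G1 : g1 = (a * q1 - (a * Q x + b) / q1 * q2) / q1)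
    by (rewrite <- E1; field; exact Hq1).
  assert (G2 : g2 = (a * q2 - 2 * g1 * q2 - (a * Q x + b) / q1 * Derive_n Q 3 x) / q1)
    by (rewrite <- E2; field; exact Hq1).
  rewrite G2, G1; field; exact Hq1.
Qed.

Lemma smooth_section (D : R -> R -> R -> Prop) (g : fun3) x1 x2 l :
  smooth_on D g -> (forall u, D x1 x2 u) -> smooth (fun u => iter_d l g x1 x2 u).
Proof.
  intros Hg HD n; revert l; induction n as [|n IH]; intro l; [exact I|]; split.
  - intro u; exact (proj1 (Hg l x1 x2 u (HD u)) DU).
  - exact (IH (DU :: l)).
Qed.

Lemma du_fbar sigma g : du (fbar sigma g) = fbar sigma (du g).
Proof.
  do 3 (apply functional_extensionality; intro).
  apply Derive_scal.
Qed.

(* No hypothesis on f - u f' is needed: [Rinv_mult] holds unconditionally as [/ 0 = 0]. *)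
Lemma Qf_fbar sigma g x1 x2 u : Qf (fbar sigma g) x1 x2 u = Qf g x1 x2 u.
Proof.
  unfold Qf; rewrite du_fbar; unfold fbar.
  pose proof (exp_pos (sigma x1 x2)).
  replace (_ - u * _) with (exp (sigma x1 x2) * (g x1 x2 u - u * du g x1 x2 u)) by ring.
  unfold Rdiv; rewrite Rinv_mult.
  replace (_ * _ * _) with (du g x1 x2 u * / (g x1 x2 u - u * du g x1 x2 u)
                            * (exp (sigma x1 x2) * / exp (sigma x1 x2))) by ring.
  rewrite Rinv_r by lra; ring.
Qed.

Lemma Derive_exp_mult (s h : R -> R) x : ex_derive s x -> ex_derive h x ->
  Derive (fun t => exp (s t) * h t) x = exp (s x) * (Derive s x * h x + Derive h x).
Proof.
  intros Hs Hh.
  apply is_derive_unique; auto_derive; [tauto|].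
  change (fun y => s y) with s; change (fun y => h y) with h; ring.
Qed.

Section ConformalChange.

Variables (sigma : R -> R -> R) (g : fun3) (x1 x2 u : R).
Hypothesis ex_sigma : forall k, ex_dpart k (fun a b _ => sigma a b) x1 x2 u.
Hypothesis ex_g : forall k, ex_dpart k g x1 x2 u.
Hypothesis ex_du_g : forall k, ex_dpart k (du g) x1 x2 u.
Hypothesis g_neq0 : g x1 x2 u <> 0.
Hypothesis du2_g_neq0 : du (du g) x1 x2 u <> 0.

Let s1 := Derive (fun t => sigma t x2) x1.
Let s2 := Derive (fun t => sigma x1 t) x2.
Let W := g x1 x2 u - u * du g x1 x2 u.

Lemma f1_fbar : f1 (fbar sigma g) x1 x2 u = f1 g x1 x2 u + (s1 + s2 * u) / 2
  - (s1 * du g x1 x2 u - s2 * W) * du g x1 x2 u / (2 * g x1 x2 u * du (du g) x1 x2 u).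
Proof.
  unfold f1, Defs.d1, Defs.d2; rewrite !du_fbar; unfold fbar; cbv beta.
  rewrite !Derive_exp_mult by first [exact (ex_sigma D1) | exact (ex_sigma D2)
    | exact (ex_g D1) | exact (ex_g D2) | exact (ex_du_g D1) | exact (ex_du_g D2)].
  pose proof (exp_pos (sigma x1 x2)).
  change (Derive (sigma x1) x2) with s2.
  unfold s1, s2, W; field; repeat split; auto; lra.
Qed.

Lemma f2_fbar : f2 (fbar sigma g) x1 x2 u = f2 g x1 x2 u + (s1 * u + s2 * (u * u)) / 2
  + (s1 * du g x1 x2 u - s2 * W) * W / (2 * g x1 x2 u * du (du g) x1 x2 u).
Proof.
  unfold f2, Defs.d1, Defs.d2; rewrite !du_fbar; unfold fbar; cbv beta.
  rewrite !Derive_exp_mult by first [exact (ex_sigma D1) | exact (ex_sigma D2)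
    | exact (ex_g D1) | exact (ex_g D2) | exact (ex_du_g D1) | exact (ex_du_g D2)].
  pose proof (exp_pos (sigma x1 x2)).
  change (Derive (sigma x1) x2) with s2.
  unfold s1, s2, W; field; repeat split; auto; lra.
Qed.

End ConformalChange.

Lemma du_Qf g x1 x2 u :
  ex_derive (fun t => g x1 x2 t) u -> ex_derive (fun t => du g x1 x2 t) u ->
  g x1 x2 u - u * du g x1 x2 u <> 0 ->
  du (Qf g) x1 x2 u
  = g x1 x2 u * du (du g) x1 x2 u / (g x1 x2 u - u * du g x1 x2 u) ^ 2.
Proof.
  intros Hg Hdg HW.
  assert (HtDg : ex_derive (fun t => t * du g x1 x2 t) u)
    by (apply ex_derive_mult; auto using ex_derive_id).
  unfold du at 1, Qf.
  rewrite Derive_div, Derive_minus, Derive_mult, Derive_id;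
    auto using ex_derive_id, ex_derive_minus.
  change (Derive (g x1 x2) u) with (du g x1 x2 u).
  unfold du; field; exact HW.
Qed.

Lemma du3_Derive_n g x1 x2 u : du3 g x1 x2 u = Derive_n (fun t => g x1 x2 t) 3 u.
Proof. reflexivity. Qed.

Section Fiber.

Variables (f : fun3) (sigma : R -> R -> R) (x1 x2 : R).
Hypothesis ex_f : forall l k u, ex_dpart k (iter_d l f) x1 x2 u.
Hypothesis smooth_f : forall l, smooth (fun u => iter_d l f x1 x2 u).
Hypothesis ex_sigma : forall k u, ex_dpart k (fun a b _ => sigma a b) x1 x2 u.
Hypothesis f_neq0 : forall u, f x1 x2 u <> 0.
Hypothesis du2_f_neq0 : forall u, du (du f) x1 x2 u <> 0.
Hypothesis W_neq0 : forall u, f x1 x2 u - u * du f x1 x2 u <> 0.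

Let s1 := Derive (fun t => sigma t x2) x1.
Let s2 := Derive (fun t => sigma x1 t) x2.
Let q := fun u => Qf f x1 x2 u.
Let c := fun u => (s1 * q u + - s2) / Derive q u.

Let smooth_f0 : smooth (fun u => f x1 x2 u) := smooth_f nil.
Let smooth_f1 : smooth (fun u => du f x1 x2 u) := smooth_f (DU :: nil).

Lemma smooth_Qf_fiber : smooth q.
Proof. unfold q, Qf; solve_smooth. Qed.

Lemma Derive_Qf_fiber_neq0 u : Derive q u <> 0.
Proof.
  change (Derive q u) with (du (Qf f) x1 x2 u).
  rewrite du_Qf by first [apply smooth_ex_derive; assumption | auto].
  apply Rmult_integral_contrapositive_currified;
    [apply Rmult_integral_contrapositive_currified; auto|].
  apply Rinv_neq_0_compat, pow_nonzero; auto.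
Qed.

Lemma f1_fbar_fiber u : f1 (fbar sigma f) x1 x2 u
  = f1 f x1 x2 u + (s1 / 2 + s2 / 2 * u + 0 * (u * u)) + -1 / 2 * (q u * c u).
Proof.
  rewrite f1_fbar by first [exact (fun k => ex_sigma k u) | exact (fun k => ex_f nil k u)
    | exact (fun k => ex_f (DU :: nil) k u) | auto].
  unfold c, q; change (Derive _ u) with (du (Qf f) x1 x2 u).
  rewrite du_Qf by first [apply smooth_ex_derive; assumption | auto].
  fold s1 s2; unfold Qf; field; auto.
Qed.

Lemma f2_fbar_fiber u : f2 (fbar sigma f) x1 x2 u
  = f2 f x1 x2 u + (0 + s1 / 2 * u + s2 / 2 * (u * u)) + 1 / 2 * c u.
Proof.
  rewrite f2_fbar by first [exact (fun k => ex_sigma k u) | exact (fun k => ex_f nil k u)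
    | exact (fun k => ex_f (DU :: nil) k u) | auto].
  unfold c, q; change (Derive _ u) with (du (Qf f) x1 x2 u).
  rewrite du_Qf by first [apply smooth_ex_derive; assumption | auto].
  fold s1 s2; unfold Qf; field; auto.
Qed.

Lemma du3_f1_Qf_du3_f2_fbar u :
  du3 (f1 (fbar sigma f)) x1 x2 u + Qf (fbar sigma f) x1 x2 u * du3 (f2 (fbar sigma f)) x1 x2 u
  = du3 (f1 f) x1 x2 u + q u * du3 (f2 f) x1 x2 u + (s1 * q u - s2) * schwarzian q u.
Proof.
  pose proof smooth_Qf_fiber as sq; pose proof Derive_Qf_fiber_neq0 as hq1.
  assert (sc : smooth c) by (unfold c; solve_smooth).
  assert (hD : forall t, 2 * f x1 x2 t * du (du f) x1 x2 t <> 0).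
  { intro t; repeat apply Rmult_integral_contrapositive_currified; auto; lra. }
  pose proof (smooth_f (DU :: DU :: nil)).
  pose proof (smooth_f (D1 :: nil)); pose proof (smooth_f (D2 :: nil)).
  pose proof (smooth_f (D1 :: DU :: nil)); pose proof (smooth_f (D2 :: DU :: nil)).
  assert (sf1 : smooth (fun t => f1 f x1 x2 t)) by (unfold f1; solve_smooth).
  assert (sf2 : smooth (fun t => f2 f x1 x2 t)) by (unfold f2; solve_smooth).
  pose proof (Derive_n_3_commutator_schwarzian q s1 (- s2) u sq hq1) as Hcomm.
  rewrite Qf_fbar, !du3_Derive_n,
    (Derive_n_ext (fun t => f1 (fbar sigma f) x1 x2 t) _ 3 u f1_fbar_fiber),
    (Derive_n_ext (fun t => f2 (fbar sigma f) x1 x2 t) _ 3 u f2_fbar_fiber),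
    (Derive_n_3_add_quadratic (fun t => f1 f x1 x2 t)),
    (Derive_n_3_add_quadratic (fun t => f2 f x1 x2 t)) by solve_smooth.
  change (Qf f x1 x2 u) with (q u); fold c in Hcomm |- *.
  cbv zeta in Hcomm; lra.
Qed.

End Fiber.

Theorem proposition4p5 :
  forall (U : R -> R -> Prop) (f : fun3) (sigma : R -> R -> R),
    open (fun p : R * R => U (fst p) (snd p)) ->
    smooth_on (fun x1 x2 _ => U x1 x2) f ->
    smooth_on (fun x1 x2 _ => U x1 x2) (fun x1 x2 _ => sigma x1 x2) ->
    (forall x1 x2 u, U x1 x2 -> 0 < f x1 x2 u) ->
    (forall x1 x2 u, U x1 x2 -> du (du f) x1 x2 u <> 0) ->
    (forall x1 x2 u, U x1 x2 -> f x1 x2 u - u * du f x1 x2 u <> 0) ->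
    forall x1 x2 u, U x1 x2 ->
      let s1 := Derive (fun t => sigma t x2) x1 in
      let s2 := Derive (fun t => sigma x1 t) x2 in
      let Q := Qf f x1 x2 u in
      let Q' := du (Qf f) x1 x2 u in
      let Q'' := du (du (Qf f)) x1 x2 u in
      let Q''' := du3 (Qf f) x1 x2 u in
      du3 (f1 (fbar sigma f)) x1 x2 u
        + Qf (fbar sigma f) x1 x2 u * du3 (f2 (fbar sigma f)) x1 x2 u
      = du3 (f1 f) x1 x2 u + Q * du3 (f2 f) x1 x2 u
        + (2 * s1 * Q * Q' * Q''' - 3 * s1 * Q'' ^ 2 * Q
           - 2 * s2 * Q' * Q''' + 3 * s2 * Q'' ^ 2) / (2 * Q' ^ 2).
Proof.
  intros U f sigma _ Hf Hsigma Hpos Hf2 HW x1 x2 u HU s1 s2 Q Q' Q'' Q'''.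
  assert (ex_f : forall l k t, ex_dpart k (iter_d l f) x1 x2 t)
    by (intros l k t; exact (proj1 (Hf l x1 x2 t HU) k)).
  assert (ex_sigma : forall k t, ex_dpart k (fun a b _ => sigma a b) x1 x2 t)
    by (intros k t; exact (proj1 (Hsigma nil x1 x2 t HU) k)).
  pose proof (fun l => smooth_section _ f x1 x2 l Hf (fun _ => HU)) as smooth_f.
  assert (f_neq0 : forall t, f x1 x2 t <> 0) by (intro t; apply Rgt_not_eq, Hpos, HU).
  pose proof (Derive_Qf_fiber_neq0 f x1 x2 smooth_f f_neq0
    (fun t => Hf2 x1 x2 t HU) (fun t => HW x1 x2 t HU) u) as HQ'.
  rewrite (du3_f1_Qf_du3_f2_fbar f sigma x1 x2 ex_f smooth_f ex_sigma f_neq0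
    (fun t => Hf2 x1 x2 t HU) (fun t => HW x1 x2 t HU) u).
  unfold schwarzian.
  change (Derive (fun t => Qf f x1 x2 t) u) with Q' in HQ' |- *.
  change (Derive_n (fun t => Qf f x1 x2 t) 2 u) with Q''.
  change (Derive_n (fun t => Qf f x1 x2 t) 3 u) with Q'''.
  change (Qf f x1 x2 u) with Q; fold s1 s2.
  field; exact HQ'.
Qed.
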